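(* Let $E/\mathbb{Q}$ be an elliptic curve of conductor $N$, $p$ a prime of good supersingular reduction, and $\chi$ the trivial or a quadratic Dirichlet character. Let $Q$ be the largest divisor of $N$ coprime to $p$ and to the conductor of $\chi$. Suppose $L_p^\sharp(E,\chi,T)$ and $L_p^\flat(E,\chi,T)$ are nonzero and write their Taylor expansions at $T=0$ as $$L_p^\sharp(E,\chi,T)=a_\sharp T^{m_\sharp}+b_\sharp T^{m_\sharp+1}+\cdots,\qquad L_p^\flat(E,\chi,T)=a_\flat T^{m_\flat}+b_\flat T^{m_\flat+1}+\cdots$$ with $a_\sharp,a_\flat\neq0$. Then $$b_\sharp=-\frac{a_\sharp}{2}\big(\log_\gamma(Q)+m_\sharp\big),\qquad b_\flat=-\frac{a_\flat}{2}\big(\log_\gamma(Q)+m_\flat\big).$$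
   Context: Notation: $\gamma$ is a topological generator of $\mathrm{Gal}(\mathbb{Q}_\infty/\mathbb{Q})\cong\mathbb{Z}_p$, $\kappa$ the cyclotomic character, $\langle x\rangle$ the projection of $x\in\mathbb{Z}_p^\times$ to $1+p\mathbb{Z}_p$ ($1+4\mathbb{Z}_2$ if $p=2$), $\log_\gamma(x)=\log\langle x\rangle/\log\kappa(\gamma)$, and $(1+T)^a=\sum_n\binom{a}{n}T^n$ for $a\in\mathbb{Z}_p$. For a Dirichlet character $\psi$, $c_Q\in\{\pm1\}$ is defined by $f|_{\left(\begin{smallmatrix}0&-1\\Q&0\end{smallmatrix}\right)}=c_Qf$, $f$ the newform of $E$. The $\sharp/\flat$ $p$-adic $L$-functions $L_p^\sharp(E,\psi,T),L_p^\flat(E,\psi,T)$ (Sprung's completed versions) are integral power series satisfying $(L_\alpha(E,\psi,T),L_\beta(E,\psi,T))=(L_p^\sharp,L_p^\flat)\mathcal{L}og_{\alpha,\beta}(1+T)$ with $L_\alpha,L_\beta$ the Amice–Vélu–Višik $p$-adic $L$-functions, and the functional equation, for $\bullet\in\{\sharp,\flat\}$, $$L_p^{\bullet}(E,\psi,T)=-(1+T)^{-\log_\gamma(Q)}\,\overline{\psi}(-Q)\,c_Q\,L_p^{\bullet}\Big(E,\overline{\psi},\tfrac{1}{1+T}-1\Big).$$ *)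

From HB Require Import structures.
From mathcomp Require Import all_boot all_order all_algebra.
Set Implicit Arguments. Unset Strict Implicit. Unset Printing Implicit Defensive.
Import Order.TTheory GRing.Theory Num.Theory.
Local Open Scope ring_scope.

Definition pseries (K : fieldType) := nat -> K.

Definition psmul (K : fieldType) (f g : pseries K) : pseries K :=
  fun n => \sum_(i < n.+1) f i * g (n - i)%N.

Definition psone (K : fieldType) : pseries K := fun n => if n is 0%N then 1 else 0.

Fixpoint psexp (K : fieldType) (g : pseries K) (k : nat) : pseries K :=
  if k is k'.+1 then psmul g (psexp g k') else psone K.

(* composition f(g(T)), meaningful when g has zero constant term *)
Definition pscomp (K : fieldType) (f g : pseries K) : pseries K :=
  fun n => \sum_(k < n.+1) f k * psexp g k n.

(* (1+T)^a = sum_n binom(a,n) T^n, a in K *)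
Definition psbinom (K : fieldType) (a : K) : pseries K :=
  fun n => (\prod_(i < n) (a - i%:R)) / (n`!)%:R.

(* the power series 1/(1+T) - 1 = sum_{n>=1} (-1)^n T^n *)
Definition psinvshift (K : fieldType) : pseries K :=
  fun n => if n is 0%N then 0 else (-1) ^+ n.

(* Functional equation of Sec. context, for a quadratic/trivial character chi
   (so chi-bar = chi):  F(T) = - (1+T)^(-lam) * eps * F(1/(1+T) - 1),
   where lam = log_gamma(Q) and eps = chi(-Q) c_Q in {1,-1}. *)
Definition satisfies_FE (K : fieldType) (lam eps : K) (F : pseries K) : Prop :=
  forall n, F n = - eps * psmul (psbinom (- lam)) (pscomp F (psinvshift K)) n.

From HB Require Import structures.
From mathcomp Require Import all_boot all_order all_algebra.
From mathcomp Require Import ring zify.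
Set Implicit Arguments.
Unset Strict Implicit.
Import GRing.Theory.
Local Open Scope ring_scope.

(* Write F = a T^m + b T^(m+1) + ... .  Since 1/(1+T) - 1 = -T + T^2 - ...,
   the series F(1/(1+T) - 1) starts with (-1)^m (a T^m - (b + m a) T^(m+1)),
   and (1+T)^(-lam) = 1 - lam T + ... .  Comparing the coefficients of T^m in
   the functional equation forces eps (-1)^m = -1; with this sign, comparing
   the coefficients of T^(m+1) gives b = -(b + m a + lam a), i.e.
   2 b = -a (lam + m). *)

Section InvShift.
Variable K : fieldType.
Local Notation S := (psinvshift K).

Lemma psexp_invshift_lt k n : (n < k)%N -> psexp S k n = 0.
Proof.
elim: k n => [//|k IHk] n lt_nk /=.
rewrite /psmul big1 // => -[[|i] lt_i] _ /=; first by rewrite mul0r.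
by rewrite IHk ?mulr0 //; lia.
Qed.

Lemma psexp_invshift_diag k : psexp S k k = (-1) ^+ k.
Proof.
elim: k => [//|k IHk] /=.
rewrite /psmul big_ord_recl /= mul0r add0r big_ord_recl /= subSS subn0 IHk.
rewrite big1 ?addr0 => [|i _]; first by rewrite exprS mulN1r.
by rewrite psexp_invshift_lt ?mulr0 //= /bump /=; have := ltn_ord i; lia.
Qed.

Lemma psexp_invshift_succ k : psexp S k k.+1 = (-1) ^+ k.+1 * k%:R.
Proof.
elim: k => [|k IHk] /=; first by rewrite mulr0.
rewrite /psmul big_ord_recl /= mul0r add0r big_ord_recl /= subSS subn0 IHk.
rewrite big_ord_recl /= /bump /= !add1n !subSS subn0 psexp_invshift_diag.
rewrite big1 ?addr0 => [|i _]; first by rewrite !exprS -addn1 natrD; ring.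
by rewrite psexp_invshift_lt ?mulr0 //= /bump /=; have := ltn_ord i; lia.
Qed.

Variables (F : pseries K) (m : nat).
Hypothesis F_lt : forall n, (n < m)%N -> F n = 0.

Lemma pscomp_invshift_lt j : (j < m)%N -> pscomp F S j = 0.
Proof.
move=> lt_jm; rewrite /pscomp big1 // => i _.
by rewrite F_lt ?mul0r //; have := ltn_ord i; lia.
Qed.

Lemma pscomp_invshift_order : pscomp F S m = (-1) ^+ m * F m.
Proof.
rewrite /pscomp big_ord_recr /= psexp_invshift_diag big1 => [|i _].
  by rewrite add0r mulrC.
by rewrite F_lt ?mul0r.
Qed.

Lemma pscomp_invshift_succ :
  pscomp F S m.+1 = - (-1) ^+ m * (F m.+1 + m%:R * F m).
Proof.
rewrite /pscomp !big_ord_recr (psexp_invshift_diag m.+1) /= psexp_invshift_succ.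
rewrite big1 ?add0r => [|i _]; first by rewrite exprS; ring.
by rewrite F_lt ?mul0r.
Qed.

End InvShift.

Lemma psmul_order (K : fieldType) (f g : pseries K) m :
  (forall j, (j < m)%N -> g j = 0) -> psmul f g m = f 0%N * g m.
Proof.
move=> g_lt; rewrite /psmul big_ord_recl subn0 big1 ?addr0 // => i _.
by rewrite g_lt ?mulr0 //= /bump /=; have := ltn_ord i; lia.
Qed.

Lemma psmul_order_succ (K : fieldType) (f g : pseries K) m :
  (forall j, (j < m)%N -> g j = 0) ->
  psmul f g m.+1 = f 0%N * g m.+1 + f 1%N * g m.
Proof.
move=> g_lt; rewrite /psmul !big_ord_recl subn0 /= /bump /= subSS subn0.
rewrite big1 ?addr0 ?addrA // => i _.
by rewrite g_lt ?mulr0 //= /bump /=; have := ltn_ord i; lia.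
Qed.

Lemma psbinom0 (K : fieldType) (a : K) : psbinom a 0 = 1.
Proof. by rewrite /psbinom big_ord0 divr1. Qed.

Lemma psbinom1 (K : fieldType) (a : K) : psbinom a 1 = a.
Proof. by rewrite /psbinom big_ord1 subr0 divr1. Qed.

Section FunctionalEquation.
Variables (K : fieldType) (lam eps : K) (F : pseries K) (m : nat).
Hypotheses (FE : satisfies_FE lam eps F) (F_lt : forall n, (n < m)%N -> F n = 0).
Hypothesis F_order : F m != 0.

Lemma satisfies_FE_sign : eps * (-1) ^+ m = -1.
Proof.
have E := FE m.
rewrite (psmul_order _ (pscomp_invshift_lt F_lt)) psbinom0 pscomp_invshift_order // mul1r in E.
have : F m * (1 + eps * (-1) ^+ m) = 0 by rewrite mulrDr mulr1 {1}E; ring.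
by move/eqP; rewrite mulf_eq0 (negbTE F_order) addrC addr_eq0 => /eqP.
Qed.

Lemma satisfies_FE_coef_succ (two_neq0 : (2 : K) != 0) :
  F m.+1 = - (F m / 2) * (lam + m%:R).
Proof.
have E := FE m.+1.
rewrite (psmul_order_succ _ (pscomp_invshift_lt F_lt)) psbinom0 psbinom1 in E.
rewrite pscomp_invshift_succ // pscomp_invshift_order // in E.
have {}E : F m.+1 = - (F m.+1 + m%:R * F m + lam * F m).
  rewrite -[RHS]mulN1r -satisfies_FE_sign {1}E; ring.
apply: (mulfI two_neq0); transitivity (- (F m * (lam + m%:R))); last by field.
have -> : 2 * F m.+1 = F m.+1 + F m.+1 by ring.
by rewrite {2}E; ring.
Qed.

End FunctionalEquation.

Theorem theorem4p4 (K : fieldType) (Hchar : [pchar K] =i pred0)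
  (lam eps : K) (Heps : eps = 1 \/ eps = -1)
  (Lsharp Lflat : pseries K)
  (FEsharp : satisfies_FE lam eps Lsharp)
  (FEflat : satisfies_FE lam eps Lflat)
  (msharp mflat : nat)
  (Hzs : forall n, (n < msharp)%N -> Lsharp n = 0) (Has : Lsharp msharp != 0)
  (Hzf : forall n, (n < mflat)%N -> Lflat n = 0) (Haf : Lflat mflat != 0) :
  Lsharp msharp.+1 = - (Lsharp msharp / 2) * (lam + msharp%:R) /\
  Lflat mflat.+1 = - (Lflat mflat / 2) * (lam + mflat%:R).
Proof.
have two_neq0 : (2 : K) != 0 by rewrite (pcharf0P K).1.
by split; apply: satisfies_FE_coef_succ.
Qed.
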